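(* Let $a>0$, $r>0$, $0<\delta<r$, and let $p\ge 2$ be an integer. For $s\in\mathbb{R}$ and sequences $\mathbf v_k=\{v_{k,n}\}_{n\ge0}\subset\ell^a_e$ ($k=1,2$), define $\mathcal M(s,\mathbf v_1,\mathbf v_2)=\{M_n(s,\mathbf v_1,\mathbf v_2)\}_{n\ge 0}$ by $$M_n(s,\mathbf v_1,\mathbf v_2)=\sum_{n_1=0}^{n}v_{1,n_1}v_{2,n-n_1}+\sum_{n_2\ge0}s^{n_2}v_{1,n+n_2}v_{2,n_2}+\sum_{n_1\ge 1}s^{n_1}v_{1,n_1}v_{2,n+n_1},$$ (products taken pointwise in $j\in\mathbb{Z}$); equivalently, for $s=|z|^2$, $\sum_{n\ge0}(z^n+\bar z^n)M_n=\big(\sum_{n_1\ge0}(z^{n_1}+\bar z^{n_1})v_{1,n_1}\big)\big(\sum_{n_2\ge0}(z^{n_2}+\bar z^{n_2})v_{2,n_2}\big)$. Define inductively $\mathcal M_2=\mathcal M$ and $\mathcal M_k(s,\mathbf v_1,\dots,\mathbf v_k)=\mathcal M_2(s,\mathbf v_1,\mathcal M_{k-1}(s,\mathbf v_2,\dots,\mathbf v_k))$. Then $s\mapsto\mathcal M_p(s,\cdot,\dots,\cdot)$ belongs to $C^\omega(B_{\mathbb{R}}(\delta^2);\mathcal L^p(X_{a,r};X_{a,r}))$, and $$\sup_{z\in B_{\mathbb{C}}(\delta)}\|\mathcal M_p(|z|^2,\cdot,\dots,\cdot)\|_{\mathcal L^p(X_{a,r};X_{a,r})}\lesssim 1.$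$
   Context: $\ell^a_e=\{u:\mathbb{Z}\to\mathbb{R}:\ \|u\|_{\ell^a_e}=(\sum_j e^{2a|j|}|u(j)|^2)^{1/2}<\infty\}$. $X_{a,r}=\{\mathbf v=\{v_n\}_{n\ge0}\subset\ell^a_e:\ \|\mathbf v\|_{a,r}=\sum_{n\ge0}r^n\|v_n\|_{\ell^a_e}<\infty\}$. For Banach spaces $X,Y$, $\mathcal L(X;Y)$ is the space of bounded linear operators, $\mathcal L^1(X;Y)=\mathcal L(X;Y)$ and $\mathcal L^n(X;Y)=\mathcal L(X;\mathcal L^{n-1}(X;Y))$ (bounded $n$-linear maps). $B_{\mathbb{R}}(\rho)=(-\rho,\rho)$, $B_{\mathbb{C}}(\rho)=\{z:|z|<\rho\}$; $C^\omega$ means real analytic. $\lesssim$ means bounded by a constant independent of $z$. *)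

From Stdlib Require Import Reals ZArith.
From Coquelicot Require Import Coquelicot.
Open Scope R_scope.

Definition seqZ := Z -> R.

(* n-th term of the Z-indexed sum  sum_j e^{2a|j|} |u j|^2, grouping j = n and j = -n. *)
Definition elle_term (a : R) (u : seqZ) (n : nat) : R :=
  match n with
  | O => (u 0%Z) ^ 2
  | S _ => exp (2 * a * INR n) * ((u (Z.of_nat n)) ^ 2 + (u (- Z.of_nat n)%Z) ^ 2)
  end.

Definition in_elle (a : R) (u : seqZ) : Prop := ex_series (elle_term a u).

Definition elle_norm (a : R) (u : seqZ) : R := sqrt (Series (elle_term a u)).

Definition V := nat -> seqZ.

Definition inX (a r : R) (v : V) : Prop :=
  (forall n, in_elle a (v n)) /\ ex_series (fun n => r ^ n * elle_norm a (v n)).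

Definition Xnorm (a r : R) (v : V) : R := Series (fun n => r ^ n * elle_norm a (v n)).

Definition Vadd (u w : V) : V := fun n j => u n j + w n j.
Definition Vscal (c : R) (u : V) : V := fun n j => c * u n j.
Definition Vsub (u w : V) : V := fun n j => u n j - w n j.
Definition Vzero : V := fun _ _ => 0.

(* a p-tuple of arguments is represented by vs : nat -> V (only indices < p matter) *)
Definition upd (vs : nat -> V) (i : nat) (u : V) : nat -> V :=
  fun k => if Nat.eqb k i then u else vs k.

Fixpoint prodR (n : nat) (f : nat -> R) : R :=
  match n with O => 1 | S m => prodR m f * f m end.

Definition args_inX (p : nat) (a r : R) (vs : nat -> V) : Prop :=
  forall k, (k < p)%nat -> inX a r (vs k).

Definition pl_linear (p : nat) (a r : R) (T : (nat -> V) -> V) : Prop :=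
  forall vs i u w c, (i < p)%nat -> args_inX p a r vs -> inX a r u -> inX a r w ->
    T (upd vs i (Vadd u (Vscal c w))) = Vadd (T (upd vs i u)) (Vscal c (T (upd vs i w))).

(* ||T||_{L^p(X;X)} <= K : T maps X^p into X with ||T(v_1..v_p)|| <= K prod ||v_i|| *)
Definition pl_bound (p : nat) (a r : R) (T : (nat -> V) -> V) (K : R) : Prop :=
  forall vs, args_inX p a r vs ->
    inX a r (T vs) /\ Xnorm a r (T vs) <= K * prodR p (fun i => Xnorm a r (vs i)).

Definition in_Lp (p : nat) (a r : R) (T : (nat -> V) -> V) : Prop :=
  pl_linear p a r T /\ exists K, pl_bound p a r T K.

Definition pl_add (T1 T2 : (nat -> V) -> V) : (nat -> V) -> V := fun vs => Vadd (T1 vs) (T2 vs).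
Definition pl_sub (T1 T2 : (nat -> V) -> V) : (nat -> V) -> V := fun vs => Vsub (T1 vs) (T2 vs).
Definition pl_scal (c : R) (T : (nat -> V) -> V) : (nat -> V) -> V := fun vs => Vscal c (T vs).

Fixpoint pl_psum (A : nat -> (nat -> V) -> V) (h : R) (N : nat) : (nat -> V) -> V :=
  match N with
  | O => fun _ => Vzero
  | S m => pl_add (pl_psum A h m) (pl_scal (h ^ m) (A m))
  end.

(* F belongs to C^omega(B_R(rho0); L^p(X_{a,r};X_{a,r})): F s is in L^p for every s
   in (-rho0, rho0), and near every s0 in that interval F is the sum of a power series
   in s - s0 with coefficients in L^p(X;X), converging in operator norm. *)
Definition real_analytic_Lp (p : nat) (a r : R) (F : R -> (nat -> V) -> V) (rho0 : R) : Prop :=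
  (forall s, Rabs s < rho0 -> in_Lp p a r (F s)) /\
  forall s0, Rabs s0 < rho0 ->
    exists rho, 0 < rho /\
    exists A : nat -> (nat -> V) -> V, (forall k, in_Lp p a r (A k)) /\
      forall s, Rabs (s - s0) < rho -> Rabs s < rho0 ->
        forall eps, 0 < eps -> exists N0 : nat, forall N, (N0 <= N)%nat ->
          pl_bound p a r (pl_sub (F s) (pl_psum A (s - s0) N)) eps.

Definition Mbil (s : R) (v1 v2 : V) : V := fun n j =>
  sum_f_R0 (fun n1 => v1 n1 j * v2 (n - n1)%nat j) n
  + Series (fun n2 => s ^ n2 * v1 (n + n2)%nat j * v2 n2 j)
  + Series (fun m => s ^ (S m) * v1 (S m) j * v2 (n + S m)%nat j).

(* Mk k s (v_1,...,v_k) with v_i = vs (i-1);  Mk 2 = Mbil,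
   Mk k s (v_1..v_k) = Mbil s v_1 (Mk (k-1) s (v_2..v_k)).  (Mk 1 is the identity,
   Mk 0 is junk; only k >= 2 is used.) *)
Fixpoint Mk (k : nat) (s : R) (vs : nat -> V) : V :=
  match k with
  | O => Vzero
  | S O => vs O
  | S k' => Mbil s (vs O) (Mk k' s (fun i => vs (S i)))
  end.

(* Writing [M_p(s)] as [Mw q (pow s)] (with [p = q + 1]), where a weight [w E] replaces the
   monomial [s ^ E] of total degree [E], makes the map linear in the weight.  Pointwise products
   in [l^a_e] satisfy [|u_j v_j| <= e^{-2a|j|} |u| |v|], and a sequence dominated by
   [e^{-2a|j|} B] lies in [l^a_e] with norm [<= c B]; hence every weight with
   [|w E| <= Om (r^2)^E] gives a p-linear map of norm [<= Om (3 c)^q], by comparison with the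
   scalar recursion [majorant] on the norms, whose three sums are weighted Cauchy products in
   the norm of [X_{a,r}].  Analyticity at [s0] comes from [s^E = sum_k (s-s0)^k C(E,k) s0^(E-k)]:
   the [k]-th coefficient weight is bounded by [(r^2 - |s0|)^(-k) (r^2)^E], and the weight of
   the remainder after [N] terms by [(|s-s0| / (r^2 - |s0|))^N (r^2)^E]. *)

From Stdlib Require Import Reals ZArith.
From Coquelicot Require Import Coquelicot.
From Stdlib Require Import Lra Lia FunctionalExtensionality.
Open Scope R_scope.

Lemma sum_f_R0_scal_l (f : nat -> R) c N : sum_f_R0 (fun i => c * f i) N = c * sum_f_R0 f N.
Proof. induction N; simpl; [ring|rewrite IHN; ring]. Qed.

Lemma ex_series_Rscal (c : R) (f : nat -> R) : ex_series f -> ex_series (fun n => c * f n).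
Proof. intro H. apply (ex_series_scal_l c) in H. exact H. Qed.

Lemma ex_series_Rplus (f g : nat -> R) :
  ex_series f -> ex_series g -> ex_series (fun n => f n + g n).
Proof. apply (@ex_series_plus R_AbsRing R_NormedModule). Qed.

Lemma ex_series_dominated (f g : nat -> R) :
  (forall n, Rabs (f n) <= g n) -> ex_series g -> ex_series f /\ Rabs (Series f) <= Series g.
Proof.
  intros Hfg Hg.
  assert (Hfa : ex_series (fun n => Rabs (f n))).
  { apply (@ex_series_le R_AbsRing R_CompleteNormedModule _ g); [|exact Hg].
    intro n. unfold norm; simpl. rewrite Rabs_Rabsolu. apply Hfg. }
  split; [apply ex_series_Rabs; exact Hfa|].
  eapply Rle_trans; [apply Series_Rabs; exact Hfa|].
  apply Series_le; [|exact Hg]. intro n; split; [apply Rabs_pos|apply Hfg].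
Qed.

Lemma ex_series_nonneg_le (f g : nat -> R) :
  (forall n, 0 <= f n <= g n) -> ex_series g -> ex_series f.
Proof.
  intros H Hg. apply (ex_series_dominated f g); [|exact Hg].
  intro n. rewrite Rabs_pos_eq; apply H.
Qed.

Lemma Series_plus_scal (f g : nat -> R) c : ex_series f -> ex_series g ->
  Series (fun n => f n + c * g n) = Series f + c * Series g.
Proof.
  intros Hf Hg. rewrite Series_plus, Series_scal_l; [reflexivity|exact Hf|].
  apply ex_series_Rscal; exact Hg.
Qed.

Lemma sum_f_R0_Series_comm (f : nat -> nat -> R) N :
  (forall n, ex_series (f n)) ->
  ex_series (fun k => sum_f_R0 (fun n => f n k) N) /\
  sum_f_R0 (fun n => Series (f n)) N = Series (fun k => sum_f_R0 (fun n => f n k) N).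
Proof.
  intros Hf. induction N as [|N [He Heq]]; simpl; [split; [apply Hf|reflexivity]|].
  split; [apply ex_series_Rplus; [exact He|apply Hf]|].
  rewrite Heq, Series_plus; [reflexivity|exact He|apply Hf].
Qed.

Section NonnegSeries.
Variable a : nat -> R.
Hypothesis a_ge0 : forall n, 0 <= a n.

Lemma sum_f_R0_nonneg N : 0 <= sum_f_R0 a N.
Proof. induction N; simpl; [apply a_ge0|]. specialize (a_ge0 (S N)); lra. Qed.

Lemma ex_series_bounded_partial M :
  (forall N, sum_f_R0 a N <= M) -> ex_series a /\ Series a <= M.
Proof.
  intros HM.
  assert (Hg : Un_growing (fun N => sum_f_R0 a N)).
  { intro n. simpl. specialize (a_ge0 (S n)). lra. }
  destruct (growing_cv _ Hg) as [l Hl]; [exists M; intros x [N ->]; apply HM|].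
  assert (Hs : is_series a l) by (apply is_series_Reals; exact Hl).
  split; [exists l; exact Hs|].
  rewrite (is_series_unique _ _ Hs). apply Rnot_lt_le; intro Hlt.
  destruct (Hl (l - M)) as [N HN]; [lra|].
  specialize (HN N (le_n N)). specialize (HM N). unfold R_dist in HN.
  apply Rabs_def2 in HN. lra.
Qed.

Hypothesis a_ex : ex_series a.

Lemma sum_f_R0_le_Series N : sum_f_R0 a N <= Series a.
Proof.
  apply sum_incr; [|exact a_ge0].
  apply is_series_Reals, Series_correct, a_ex.
Qed.

Lemma sum_f_R0_shift_le_Series k N : sum_f_R0 (fun n => a (n + k)%nat) N <= Series a.
Proof.
  eapply Rle_trans; [|apply (sum_f_R0_le_Series (N + k))].
  induction N; simpl; [|lra].
  destruct k; simpl; [lra|]. pose proof (sum_f_R0_nonneg k); lra.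
Qed.

Lemma Series_ge_term m : a m <= Series a.
Proof. apply (sum_f_R0_shift_le_Series m 0). Qed.

Lemma Series_nonneg : 0 <= Series a.
Proof. eapply Rle_trans; [apply (a_ge0 O)|apply Series_ge_term]. Qed.

End NonnegSeries.

Definition elle_weight (a : R) (j : Z) : R := exp (- (a * IZR (Z.abs j))).

Definition elle_mul_const (a : R) : R := sqrt (2 / (1 - exp (- (2 * a)))).

Lemma elle_weight_pos a j : 0 < elle_weight a j.
Proof. apply exp_pos. Qed.

Lemma elle_mul_const_nonneg a : 0 <= elle_mul_const a.
Proof. apply sqrt_pos. Qed.

Lemma elle_term_nonneg a u n : 0 <= elle_term a u n.
Proof.
  destruct n; unfold elle_term; [apply pow2_ge_0|].
  apply Rmult_le_pos; [left; apply exp_pos|].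
  apply Rplus_le_le_0_compat; apply pow2_ge_0.
Qed.

Lemma elle_norm_nonneg a u : 0 <= elle_norm a u.
Proof. apply sqrt_pos. Qed.

Lemma exp_INR_mul n x : exp (INR n * x) = exp x ^ n.
Proof.
  induction n; [simpl; rewrite Rmult_0_l, exp_0; reflexivity|].
  rewrite S_INR, Rmult_plus_distr_r, Rmult_1_l, exp_plus, IHn. simpl. ring.
Qed.

Lemma elle_term_ge_coord a u j :
  exp (2 * (a * IZR (Z.abs j))) * u j ^ 2 <= elle_term a u (Z.abs_nat j).
Proof.
  destruct j as [|p|p]; simpl Z.abs_nat.
  - simpl. replace (2 * (a * 0)) with 0 by ring. rewrite exp_0. lra.
  - destruct (Pos2Nat.is_succ p) as [k Hk]. rewrite Hk. unfold elle_term. rewrite <- Hk.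
    rewrite positive_nat_Z, INR_IZR_INZ, positive_nat_Z. simpl Z.abs.
    replace (2 * a * IZR (Z.pos p)) with (2 * (a * IZR (Z.pos p))) by ring.
    pose proof (exp_pos (2 * (a * IZR (Z.pos p)))). pose proof (pow2_ge_0 (u (- Z.pos p)%Z)). nra.
  - destruct (Pos2Nat.is_succ p) as [k Hk]. rewrite Hk. unfold elle_term. rewrite <- Hk.
    rewrite positive_nat_Z, INR_IZR_INZ, positive_nat_Z. simpl Z.abs. simpl Z.opp.
    replace (2 * a * IZR (Z.pos p)) with (2 * (a * IZR (Z.pos p))) by ring.
    pose proof (exp_pos (2 * (a * IZR (Z.pos p)))). pose proof (pow2_ge_0 (u (Z.pos p))). nra.
Qed.

Lemma elle_coord_le a u j : in_elle a u -> Rabs (u j) <= elle_weight a j * elle_norm a u.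
Proof.
  intros Hu. unfold elle_norm, elle_weight.
  set (x := a * IZR (Z.abs j)). set (Sm := Series (elle_term a u)).
  assert (Hk : exp (2 * x) * u j ^ 2 <= Sm).
  { eapply Rle_trans; [apply elle_term_ge_coord|].
    apply Series_ge_term; [apply elle_term_nonneg|exact Hu]. }
  assert (HS : 0 <= Sm) by (apply Series_nonneg; [apply elle_term_nonneg|exact Hu]).
  assert (Hu2 : u j ^ 2 <= (exp (- x) * sqrt Sm) ^ 2).
  { rewrite Rpow_mult_distr, pow2_sqrt by exact HS.
    replace (exp (- x) ^ 2) with (/ exp (2 * x)).
    - pose proof (exp_pos (2 * x)). apply (Rmult_le_reg_l (exp (2 * x))); [lra|].
      field_simplify; lra.
    - replace (2 * x) with (x + x) by ring. rewrite exp_plus, exp_Ropp. simpl.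
      field. apply Rgt_not_eq, exp_pos. }
  rewrite <- (sqrt_pow2 (Rabs (u j))) by apply Rabs_pos.
  rewrite <- (sqrt_pow2 (exp (- x) * sqrt Sm))
    by (apply Rmult_le_pos; [left; apply exp_pos|apply sqrt_pos]).
  apply sqrt_le_1_alt. rewrite pow2_abs. exact Hu2.
Qed.

Lemma elle_coord_mul_le a u v j B : in_elle a u -> in_elle a v -> elle_norm a v <= B ->
  Rabs (u j * v j) <= elle_weight a j * elle_weight a j * (elle_norm a u * B).
Proof.
  intros Hu Hv HB. rewrite Rabs_mult.
  pose proof (elle_coord_le a u j Hu). pose proof (elle_coord_le a v j Hv).
  pose proof (elle_weight_pos a j). pose proof (elle_norm_nonneg a u).
  replace (elle_weight a j * elle_weight a j * (elle_norm a u * B)) with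
    ((elle_weight a j * elle_norm a u) * (elle_weight a j * B)) by ring.
  apply Rmult_le_compat; try apply Rabs_pos; [assumption|].
  eapply Rle_trans; [eassumption|]. apply Rmult_le_compat_l; lra.
Qed.

Section ElleFromPointwise.
Variables (a B : R) (w : seqZ).
Hypotheses (a_pos : 0 < a) (B_ge0 : 0 <= B)
  (w_le : forall j, Rabs (w j) <= elle_weight a j * elle_weight a j * B).

Let q := exp (- (2 * a)).

(* On the shell [|j| = n], [elle_weight a j ^ 2 = q ^ n]: squaring the bound gives [q ^ (2 n)],
   and one factor [q ^ n] cancels the weight [exp (2 a n)] of [elle_term]. *)
Lemma elle_term_le_geometric n : elle_term a w n <= 2 * B ^ 2 * q ^ n.
Proof.
  assert (Hsq : forall j, w j ^ 2 <= (elle_weight a j * elle_weight a j * B) ^ 2).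
  { intro j. rewrite <- pow2_abs. apply pow_incr. split; [apply Rabs_pos|apply w_le]. }
  destruct n as [|k].
  - unfold elle_term. specialize (Hsq 0%Z). unfold elle_weight in Hsq.
    replace (- (a * IZR (Z.abs 0))) with 0 in Hsq by (simpl; ring).
    rewrite exp_0 in Hsq. simpl pow in *. nra.
  - unfold elle_term. set (n := S k).
    set (t := exp (- a) ^ n).
    assert (Hwt : forall j, Z.abs j = Z.of_nat n -> elle_weight a j = t).
    { intros j Hj. unfold elle_weight, t. rewrite Hj, <- INR_IZR_INZ, <- exp_INR_mul.
      f_equal; ring. }
    pose proof (Hsq (Z.of_nat n)) as Hs1. pose proof (Hsq (- Z.of_nat n)%Z) as Hs2.
    rewrite Hwt in Hs1, Hs2 by lia.
    assert (E : exp (2 * a * INR n) * t ^ 2 = 1).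
    { unfold t. rewrite <- exp_INR_mul.
      replace (exp (INR n * - a) ^ 2) with (exp (INR n * - a) * exp (INR n * - a)) by ring.
      rewrite <- !exp_plus.
      replace (2 * a * INR n + (INR n * - a + INR n * - a)) with 0 by ring. apply exp_0. }
    assert (Hqn : q ^ n = t ^ 2).
    { unfold t, q. rewrite <- !pow_mult, <- !exp_INR_mul, mult_INR. f_equal. simpl. ring. }
    rewrite Hqn. pose proof (exp_pos (2 * a * INR n)). pose proof (pow2_ge_0 t).
    replace ((t * t * B) ^ 2) with (t ^ 2 * (t ^ 2 * B ^ 2)) in Hs1, Hs2 by ring.
    apply Rle_trans with (exp (2 * a * INR n) * (2 * (t ^ 2 * (t ^ 2 * B ^ 2)))).
    + apply Rmult_le_compat_l; lra.
    + replace (exp (2 * a * INR n) * (2 * (t ^ 2 * (t ^ 2 * B ^ 2)))) with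
        ((exp (2 * a * INR n) * t ^ 2) * (2 * B ^ 2 * t ^ 2)) by ring.
      rewrite E. lra.
Qed.

Lemma elle_of_pointwise_le : in_elle a w /\ elle_norm a w <= elle_mul_const a * B.
Proof.
  assert (Hq0 : 0 < q) by apply exp_pos.
  assert (Hq1 : q < 1) by (unfold q; rewrite <- exp_0; apply exp_increasing; lra).
  assert (Hg : is_series (fun n => 2 * B ^ 2 * q ^ n) (2 * B ^ 2 * / (1 - q))).
  { apply (@is_series_scal_l R_AbsRing R_NormedModule (2 * B ^ 2)).
    apply is_series_geom. rewrite Rabs_pos_eq; lra. }
  assert (Hex : ex_series (elle_term a w)).
  { apply (@ex_series_le R_AbsRing R_CompleteNormedModule _ (fun n => 2 * B ^ 2 * q ^ n)).
    - intro n. unfold norm; simpl. rewrite Rabs_pos_eq by apply elle_term_nonneg.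
      apply elle_term_le_geometric.
    - eexists; exact Hg. }
  split; [exact Hex|].
  assert (HS : Series (elle_term a w) <= 2 * B ^ 2 * / (1 - q)).
  { rewrite <- (is_series_unique _ _ Hg). apply Series_le; [|eexists; exact Hg].
    intro n; split; [apply elle_term_nonneg|apply elle_term_le_geometric]. }
  unfold elle_norm, elle_mul_const. fold q.
  rewrite <- (sqrt_pow2 B B_ge0) at 1. rewrite <- sqrt_mult.
  - apply sqrt_le_1_alt. unfold Rdiv. lra.
  - unfold Rdiv. apply Rmult_le_pos; [lra|]. left; apply Rinv_0_lt_compat; lra.
  - apply pow2_ge_0.
Qed.

End ElleFromPointwise.

Lemma elle_scal a c u : in_elle a u ->
  in_elle a (fun j => c * u j) /\ elle_norm a (fun j => c * u j) = Rabs c * elle_norm a u.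
Proof.
  intros Hu.
  assert (Ht : forall n, elle_term a (fun j => c * u j) n = c ^ 2 * elle_term a u n)
    by (intros [|n]; unfold elle_term; ring).
  split.
  - unfold in_elle. eapply ex_series_ext; [intro n; symmetry; apply Ht|].
    apply ex_series_Rscal, Hu.
  - unfold elle_norm. rewrite (Series_ext _ _ Ht), Series_scal_l.
    rewrite sqrt_mult_alt by apply pow2_ge_0.
    rewrite <- Rsqr_pow2, sqrt_Rsqr_abs. reflexivity.
Qed.

Definition const_coord (e : nat -> R) : V := fun n _ => e n.

Section WeightedConvolutions.
Variables (r : R) (e G : nat -> R).
Hypotheses (r_pos : 0 < r) (e_ge0 : forall n, 0 <= e n) (G_ge0 : forall n, 0 <= G n)
  (e_ex : ex_series (fun n => r ^ n * e n)) (G_ex : ex_series (fun n => r ^ n * G n)).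

Let Se := Series (fun n => r ^ n * e n).
Let SG := Series (fun n => r ^ n * G n).

Let pow_r_pos n : 0 < r ^ n. Proof. apply pow_lt, r_pos. Qed.
Let pow_rr_ge0 n : 0 <= (r * r) ^ n. Proof. apply pow_le; nra. Qed.
Let re_ge0 n : 0 <= r ^ n * e n. Proof. apply Rmult_le_pos; [left|]; auto. Qed.
Let rG_ge0 n : 0 <= r ^ n * G n. Proof. apply Rmult_le_pos; [left|]; auto. Qed.

Lemma weighted_cauchy_product :
  ex_series (fun n => r ^ n * sum_f_R0 (fun n1 => e n1 * G (n - n1)%nat) n) /\
  Series (fun n => r ^ n * sum_f_R0 (fun n1 => e n1 * G (n - n1)%nat) n) = Se * SG.
Proof.
  assert (Hm : is_series (fun n => r ^ n * sum_f_R0 (fun n1 => e n1 * G (n - n1)%nat) n) (Se * SG)).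
  { eapply is_series_ext;
      [|apply (is_series_mult_pos _ _ _ _ (Series_correct _ e_ex) (Series_correct _ G_ex) re_ge0 rG_ge0)].
    intro n. rewrite scal_sum. apply sum_eq. intros i Hi.
    replace (r ^ n) with (r ^ i * r ^ (n - i)) by (rewrite <- pow_add; f_equal; lia). ring. }
  split; [eexists; exact Hm|apply is_series_unique; exact Hm].
Qed.

(* The factor [r ^ n] is absorbed by the term of index [n + k] of the convergent series [Se]. *)
Lemma ex_series_weighted_up n : ex_series (fun k => (r * r) ^ k * e (n + k)%nat * G k).
Proof.
  apply (ex_series_nonneg_le _ (fun k => (Se / r ^ n) * (r ^ k * G k))).
  - intro k. split; [apply Rmult_le_pos; [apply Rmult_le_pos|]; auto|].
    pose proof (Series_ge_term _ re_ge0 e_ex (n + k)) as T. fold Se in T; cbv beta in T.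
    rewrite pow_add in T. rewrite Rpow_mult_distr.
    apply (Rmult_le_reg_l (r ^ n)); [auto|]. unfold Rdiv.
    replace (r ^ n * (Se * / r ^ n * (r ^ k * G k))) with (Se * (r ^ k * G k))
      by (field; apply Rgt_not_eq, pow_r_pos).
    replace (r ^ n * (r ^ k * r ^ k * e (n + k)%nat * G k)) with
      ((r ^ n * r ^ k * e (n + k)%nat) * (r ^ k * G k)) by ring.
    apply Rmult_le_compat_r; [apply rG_ge0|exact T].
  - apply ex_series_Rscal, G_ex.
Qed.

Lemma ex_series_weighted_down n : ex_series (fun m => (r * r) ^ S m * e (S m) * G (n + S m)%nat).
Proof.
  apply (ex_series_nonneg_le _ (fun m => (SG / r ^ n) * (r ^ S m * e (S m)))).
  - intro k. split; [apply Rmult_le_pos; [apply Rmult_le_pos|]; auto|].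
    pose proof (Series_ge_term _ rG_ge0 G_ex (n + S k)) as T. fold SG in T; cbv beta in T.
    rewrite pow_add in T. rewrite Rpow_mult_distr.
    apply (Rmult_le_reg_l (r ^ n)); [auto|]. unfold Rdiv.
    replace (r ^ n * (SG * / r ^ n * (r ^ S k * e (S k)))) with (SG * (r ^ S k * e (S k)))
      by (field; apply Rgt_not_eq, pow_r_pos).
    replace (r ^ n * (r ^ S k * r ^ S k * e (S k) * G (n + S k)%nat)) with
      ((r ^ n * r ^ S k * G (n + S k)%nat) * (r ^ S k * e (S k))) by ring.
    apply Rmult_le_compat_r; [apply re_ge0|exact T].
  - apply ex_series_Rscal, (ex_series_incr_1 (fun m => r ^ m * e m)), e_ex.
Qed.

Lemma weighted_up_le :
  ex_series (fun n => r ^ n * Series (fun k => (r * r) ^ k * e (n + k)%nat * G k)) /\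
  Series (fun n => r ^ n * Series (fun k => (r * r) ^ k * e (n + k)%nat * G k)) <= Se * SG.
Proof.
  apply ex_series_bounded_partial.
  - intro n. apply Rmult_le_pos; [left; auto|]. apply Series_nonneg; [|apply ex_series_weighted_up].
    intro k. apply Rmult_le_pos; [apply Rmult_le_pos|]; auto.
  - intro N.
    assert (Hx : forall n, ex_series (fun k => r ^ n * ((r * r) ^ k * e (n + k)%nat * G k)))
      by (intro n; apply ex_series_Rscal, ex_series_weighted_up).
    destruct (sum_f_R0_Series_comm _ N Hx) as [Hex Heq].
    rewrite (sum_eq _ _ _ (fun i _ => eq_sym (Series_scal_l _ _))), Heq.
    replace (Se * SG) with (Series (fun k => Se * (r ^ k * G k)))
      by (rewrite Series_scal_l; reflexivity).
    apply Series_le; [|apply ex_series_Rscal, G_ex].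
    intro k. split.
    + apply sum_f_R0_nonneg. intro n. apply Rmult_le_pos; [left; auto|].
      apply Rmult_le_pos; [apply Rmult_le_pos|]; auto.
    + rewrite (sum_eq _ (fun n => (r ^ (n + k) * e (n + k)%nat) * (r ^ k * G k)))
        by (intros i _; rewrite pow_add, Rpow_mult_distr; ring).
      rewrite <- (Rmult_comm (r ^ k * G k)), <- scal_sum.
      apply Rmult_le_compat_l; [apply rG_ge0|].
      apply (sum_f_R0_shift_le_Series (fun n => r ^ n * e n)); [apply re_ge0|exact e_ex].
Qed.

Lemma weighted_down_le :
  ex_series (fun n => r ^ n * Series (fun m => (r * r) ^ S m * e (S m) * G (n + S m)%nat)) /\
  Series (fun n => r ^ n * Series (fun m => (r * r) ^ S m * e (S m) * G (n + S m)%nat)) <= Se * SG.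
Proof.
  apply ex_series_bounded_partial.
  - intro n. apply Rmult_le_pos; [left; auto|]. apply Series_nonneg; [|apply ex_series_weighted_down].
    intro k. apply Rmult_le_pos; [apply Rmult_le_pos|]; auto.
  - intro N.
    assert (Hx : forall n, ex_series (fun m => r ^ n * ((r * r) ^ S m * e (S m) * G (n + S m)%nat)))
      by (intro n; apply ex_series_Rscal, ex_series_weighted_down).
    destruct (sum_f_R0_Series_comm _ N Hx) as [Hex Heq].
    rewrite (sum_eq _ _ _ (fun i _ => eq_sym (Series_scal_l _ _))), Heq.
    assert (Hsh : ex_series (fun m => r ^ S m * e (S m))) by apply (ex_series_incr_1 (fun m => r ^ m * e m)), e_ex.
    apply Rle_trans with (Series (fun m => SG * (r ^ S m * e (S m)))).
    + apply Series_le; [|apply ex_series_Rscal, Hsh].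
      intro k. split.
      * apply sum_f_R0_nonneg. intro n. apply Rmult_le_pos; [left; auto|].
        apply Rmult_le_pos; [apply Rmult_le_pos|]; auto.
      * rewrite (sum_eq _ (fun n => (r ^ (n + S k) * G (n + S k)%nat) * (r ^ S k * e (S k))))
          by (intros i _; rewrite pow_add, Rpow_mult_distr; ring).
        rewrite <- (Rmult_comm (r ^ S k * e (S k))), <- scal_sum.
        apply Rmult_le_compat_l; [apply re_ge0|].
        apply (sum_f_R0_shift_le_Series (fun n => r ^ n * G n)); [apply rG_ge0|exact G_ex].
    + rewrite Series_scal_l, Rmult_comm. apply Rmult_le_compat_r.
      * apply Series_nonneg; [apply rG_ge0|exact G_ex].
      * unfold Se. rewrite (Series_incr_1 _ e_ex). pose proof (re_ge0 0). lra.
Qed.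

Lemma Mbil_const_coord_bound :
  let M n := Mbil (r * r) (const_coord e) (const_coord G) n 0%Z in
  (forall n, 0 <= M n) /\ ex_series (fun n => r ^ n * M n) /\
  Series (fun n => r ^ n * M n) <= 3 * (Se * SG).
Proof.
  intro M. unfold M, Mbil, const_coord.
  destruct weighted_cauchy_product as [HAe HAs].
  destruct weighted_up_le as [HBe HBs]. destruct weighted_down_le as [HCe HCs].
  split; [|split].
  - intro n. apply Rplus_le_le_0_compat; [apply Rplus_le_le_0_compat|].
    + apply sum_f_R0_nonneg. intro; apply Rmult_le_pos; auto.
    + apply Series_nonneg; [|apply ex_series_weighted_up].
      intro k. apply Rmult_le_pos; [apply Rmult_le_pos|]; auto.
    + apply Series_nonneg; [|apply ex_series_weighted_down].
      intro k. apply Rmult_le_pos; [apply Rmult_le_pos|]; auto.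
  - eapply ex_series_ext; [intro n; symmetry; apply Rmult_plus_distr_l|].
    apply ex_series_Rplus; [|exact HCe].
    eapply ex_series_ext; [intro n; symmetry; apply Rmult_plus_distr_l|].
    apply ex_series_Rplus; assumption.
  - rewrite (Series_ext _ (fun n => (r ^ n * sum_f_R0 (fun n1 => e n1 * G (n - n1)%nat) n
        + r ^ n * Series (fun k => (r * r) ^ k * e (n + k)%nat * G k))
        + r ^ n * Series (fun m => (r * r) ^ S m * e (S m) * G (n + S m)%nat)))
      by (intro; ring).
    rewrite Series_plus, Series_plus; auto; [|apply ex_series_Rplus; auto].
    lra.
Qed.

End WeightedConvolutions.

Lemma prodR_shift n f : prodR (S n) f = f O * prodR n (fun i => f (S i)).
Proof. induction n; simpl in *; [ring|]. rewrite IHn. ring. Qed.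

Lemma prodR_nonneg n f : (forall i, (i < n)%nat -> 0 <= f i) -> 0 <= prodR n f.
Proof. intros H; induction n; simpl; [lra|]. apply Rmult_le_pos; auto. Qed.

Fixpoint majorant (rr c : R) (q : nat) (es : nat -> nat -> R) : nat -> R :=
  match q with
  | O => es O
  | S q' => fun n =>
      c * Mbil rr (const_coord (es O)) (const_coord (majorant rr c q' (fun i => es (S i)))) n 0%Z
  end.

Lemma majorant_bound (r c : R) : 0 < r -> 0 <= c -> forall q es,
  (forall i n, 0 <= es i n) -> (forall i, (i <= q)%nat -> ex_series (fun n => r ^ n * es i n)) ->
  (forall n, 0 <= majorant (r * r) c q es n) /\
  ex_series (fun n => r ^ n * majorant (r * r) c q es n) /\
  Series (fun n => r ^ n * majorant (r * r) c q es n) <=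
    (3 * c) ^ q * prodR (S q) (fun i => Series (fun n => r ^ n * es i n)).
Proof.
  intros Hr Hc q. induction q as [|q IH]; intros es Hes Hex.
  - split; [intro n; apply Hes|]. split; [apply Hex; lia|simpl; lra].
  - destruct (IH (fun i => es (S i))) as [HG0 [HGe HGs]];
      [intros; apply Hes|intros i Hi; apply Hex; lia|].
    assert (He : ex_series (fun n => r ^ n * es O n)) by (apply Hex; lia).
    destruct (Mbil_const_coord_bound r (es O) _ Hr (Hes O) HG0 He HGe) as [HM0 [HMe HMs]].
    cbn zeta in HM0, HMe, HMs. cbn [majorant].
    assert (HSe : 0 <= Series (fun n => r ^ n * es O n)).
    { apply Series_nonneg; [|exact He]. intro; apply Rmult_le_pos; [apply pow_le; lra|apply Hes]. }
    split; [|split].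
    + intro n. apply Rmult_le_pos; auto.
    + eapply ex_series_ext; [|apply (ex_series_Rscal c _ HMe)]. intro n; simpl; ring.
    + rewrite (Series_ext _ (fun n => c * (r ^ n * Mbil (r * r) (const_coord (es O))
          (const_coord (majorant (r * r) c q (fun i => es (S i)))) n 0%Z))) by (intro; ring).
      rewrite Series_scal_l, prodR_shift. change ((3 * c) ^ S q) with (3 * c * (3 * c) ^ q).
      apply Rle_trans with (c * (3 * (Series (fun n => r ^ n * es O n) *
        ((3 * c) ^ q * prodR (S q) (fun i => Series (fun n => r ^ n * es (S i) n)))))).
      * apply Rmult_le_compat_l; [exact Hc|]. eapply Rle_trans; [exact HMs|].
        apply Rmult_le_compat_l; [lra|]. apply Rmult_le_compat_l; assumption.
      * right; ring.
Qed.

Definition wshift (k : nat) (w : nat -> R) : nat -> R := fun E => w (k + E)%nat.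

(* [Mw q w] is [Mk (S q) s] with every monomial [s ^ E] replaced by [w E]; it is linear in [w]. *)
Fixpoint Mw (q : nat) (w : nat -> R) (vs : nat -> V) : V :=
  match q with
  | O => fun n j => w O * vs O n j
  | S q' => fun n j =>
    sum_f_R0 (fun n1 => vs O n1 j * Mw q' w (fun i => vs (S i)) (n - n1)%nat j) n
    + Series (fun k => vs O (n + k)%nat j * Mw q' (wshift k w) (fun i => vs (S i)) k j)
    + Series (fun m => vs O (S m) j * Mw q' (wshift (S m) w) (fun i => vs (S i)) (n + S m)%nat j)
  end.

Definition weight_le (r Om : R) (w : nat -> R) : Prop :=
  0 <= Om /\ forall E, Rabs (w E) <= Om * (r * r) ^ E.

Lemma weight_le_shift r Om w k : weight_le r Om w -> weight_le r (Om * (r * r) ^ k) (wshift k w).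
Proof.
  intros [H0 H]. split; [apply Rmult_le_pos; [exact H0|apply pow_le; nra]|].
  intro E. unfold wshift. rewrite Rmult_assoc, <- pow_add. apply H.
Qed.

Lemma weight_le_lin r Om1 Om2 w1 w2 c : weight_le r Om1 w1 -> weight_le r Om2 w2 ->
  weight_le r (Om1 + Rabs c * Om2) (fun E => w1 E + c * w2 E).
Proof.
  intros [H10 H1] [H20 H2]. pose proof (Rabs_pos c). split; [nra|].
  intro E. eapply Rle_trans; [apply Rabs_triang|]. rewrite Rabs_mult.
  specialize (H1 E). specialize (H2 E).
  apply Rle_trans with (Om1 * (r * r) ^ E + Rabs c * (Om2 * (r * r) ^ E)); [|right; ring].
  apply Rplus_le_compat; [exact H1|]. apply Rmult_le_compat_l; auto.
Qed.

Lemma args_tail p a r vs : args_inX (S p) a r vs -> args_inX p a r (fun i => vs (S i)).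
Proof. intros H k Hk. apply H. lia. Qed.

Lemma args_upd p a r vs i u : args_inX p a r vs -> inX a r u -> args_inX p a r (upd vs i u).
Proof. intros H Hu k Hk. unfold upd. destruct (Nat.eqb k i); auto. Qed.

Definition norms (a : R) (vs : nat -> V) : nat -> nat -> R := fun i n => elle_norm a (vs i n).

Lemma Mw_scal_weight : forall q w vs c n j, Mw q (fun E => c * w E) vs n j = c * Mw q w vs n j.
Proof.
  induction q as [|q IH]; intros w vs c n j; cbn [Mw]; [ring|].
  rewrite (sum_eq _ (fun n1 => c * (vs O n1 j * Mw q w (fun i => vs (S i)) (n - n1)%nat j)))
    by (intros i _; rewrite IH; ring).
  rewrite (Series_ext _ (fun k => c * (vs O (n + k)%nat j * Mw q (wshift k w) (fun i => vs (S i)) k j)))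
    by (intro k; change (wshift k (fun E => c * w E)) with (fun E => c * wshift k w E); rewrite IH; ring).
  rewrite (Series_ext (fun m => vs O (S m) j * Mw q (wshift (S m) (fun E => c * w E)) (fun i => vs (S i)) (n + S m)%nat j)
     (fun m => c * (vs O (S m) j * Mw q (wshift (S m) w) (fun i => vs (S i)) (n + S m)%nat j)))
    by (intro k; change (wshift (S k) (fun E => c * w E)) with (fun E => c * wshift (S k) w E); rewrite IH; ring).
  rewrite !Series_scal_l, sum_f_R0_scal_l. ring.
Qed.

Section MwEstimates.
Variables (a r : R).
Hypotheses (a_pos : 0 < a) (r_pos : 0 < r).
Let c := elle_mul_const a.

Section Pieces.
Variables (q : nat) (w : nat -> R) (Om : R) (vs : nat -> V).
Hypotheses (w_le : weight_le r Om w) (vs_in : args_inX (S (S q)) a r vs).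
Let tl := fun i => vs (S i).
Let e := norms a vs O.
Let G := majorant (r * r) c q (norms a tl).
Hypothesis tail_bound : forall Om' w', weight_le r Om' w' -> forall n,
  in_elle a (Mw q w' tl n) /\ elle_norm a (Mw q w' tl n) <= Om' * G n.
Variables (n : nat) (j : Z).
Let z := elle_weight a j * elle_weight a j.

Let v0_in : inX a r (vs O). Proof. apply vs_in; lia. Qed.
Let G_ge0_ex : (forall k, 0 <= G k) /\ ex_series (fun k => r ^ k * G k).
Proof.
  destruct (majorant_bound r c r_pos (elle_mul_const_nonneg a) q (norms a tl)) as [H0 [He _]];
    [intros; apply elle_norm_nonneg|intros i Hi; apply (vs_in (S i)); lia|].
  split; assumption.
Qed.
Let e_ge0 k : 0 <= e k. Proof. apply elle_norm_nonneg. Qed.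

Lemma Mw_diag_le :
  Rabs (sum_f_R0 (fun n1 => vs O n1 j * Mw q w tl (n - n1)%nat j) n)
    <= z * (Om * sum_f_R0 (fun n1 => e n1 * G (n - n1)%nat) n).
Proof.
  eapply Rle_trans; [apply sum_f_R0_triangle|].
  rewrite <- !sum_f_R0_scal_l. apply sum_Rle. intros n1 _.
  destruct (tail_bound Om w w_le (n - n1)%nat) as [Hi Hb].
  eapply Rle_trans; [apply (elle_coord_mul_le _ _ _ _ _ (proj1 v0_in n1) Hi Hb)|].
  right. unfold z, e, norms. ring.
Qed.

Lemma Mw_up_le :
  ex_series (fun k => vs O (n + k)%nat j * Mw q (wshift k w) tl k j) /\
  Rabs (Series (fun k => vs O (n + k)%nat j * Mw q (wshift k w) tl k j))
    <= z * (Om * Series (fun k => (r * r) ^ k * e (n + k)%nat * G k)).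
Proof.
  rewrite <- !Series_scal_l. apply ex_series_dominated.
  - intro k. destruct (tail_bound _ _ (weight_le_shift r Om w k w_le) k) as [Hi Hb].
    eapply Rle_trans; [apply (elle_coord_mul_le _ _ _ _ _ (proj1 v0_in (n + k)%nat) Hi Hb)|].
    right. unfold z, e, norms. ring.
  - apply ex_series_Rscal, ex_series_Rscal.
    apply (ex_series_weighted_up r); try apply G_ge0_ex; auto. apply v0_in.
Qed.

Lemma Mw_down_le :
  ex_series (fun m => vs O (S m) j * Mw q (wshift (S m) w) tl (n + S m)%nat j) /\
  Rabs (Series (fun m => vs O (S m) j * Mw q (wshift (S m) w) tl (n + S m)%nat j))
    <= z * (Om * Series (fun m => (r * r) ^ S m * e (S m) * G (n + S m)%nat)).
Proof.
  rewrite <- !Series_scal_l. apply ex_series_dominated.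
  - intro k. destruct (tail_bound _ _ (weight_le_shift r Om w (S k) w_le) (n + S k)%nat) as [Hi Hb].
    eapply Rle_trans; [apply (elle_coord_mul_le _ _ _ _ _ (proj1 v0_in (S k)) Hi Hb)|].
    right. unfold z, e, norms. ring.
  - apply ex_series_Rscal, ex_series_Rscal.
    apply (ex_series_weighted_down r); try apply G_ge0_ex; auto. apply v0_in.
Qed.

Lemma Mw_coord_le :
  Rabs (Mw (S q) w vs n j) <= z * (Om * Mbil (r * r) (const_coord e) (const_coord G) n 0%Z).
Proof.
  pose proof Mw_diag_le. destruct Mw_up_le as [_ Hup]. destruct Mw_down_le as [_ Hdown].
  cbn [Mw]. fold tl. unfold Mbil, const_coord.
  eapply Rle_trans; [apply Rabs_triang|]. eapply Rle_trans; [apply Rplus_le_compat_r, Rabs_triang|].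
  lra.
Qed.

End Pieces.

Lemma Mw_elle_bound : forall q Om w vs, weight_le r Om w -> args_inX (S q) a r vs -> forall n,
  in_elle a (Mw q w vs n) /\ elle_norm a (Mw q w vs n) <= Om * majorant (r * r) c q (norms a vs) n.
Proof.
  induction q as [|q IH]; intros Om w vs Hw Hvs n.
  - destruct (elle_scal a (w O) (vs O n)) as [H1 H2]; [apply Hvs; lia|].
    cbn [Mw majorant]. split; [exact H1|]. rewrite H2. destruct Hw as [_ HwE].
    specialize (HwE O). simpl pow in HwE. rewrite Rmult_1_r in HwE.
    apply Rmult_le_compat_r; [apply elle_norm_nonneg|exact HwE].
  - set (B := Om * Mbil (r * r) (const_coord (norms a vs O))
      (const_coord (majorant (r * r) c q (norms a (fun i => vs (S i))))) n 0%Z).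
    assert (Hpt : forall j, Rabs (Mw (S q) w vs n j) <= elle_weight a j * elle_weight a j * B).
    { intro j. apply (Mw_coord_le q w Om vs Hw Hvs).
      intros Om' w' Hw'. apply IH; [exact Hw'|apply args_tail, Hvs]. }
    assert (HB : 0 <= B).
    { specialize (Hpt 0%Z). pose proof (Rabs_pos (Mw (S q) w vs n 0%Z)).
      pose proof (elle_weight_pos a 0). apply (Rmult_le_reg_l (elle_weight a 0 * elle_weight a 0)); nra. }
    destruct (elle_of_pointwise_le a B _ a_pos HB Hpt) as [H1 H2].
    split; [exact H1|]. eapply Rle_trans; [exact H2|].
    right. cbn [majorant]. fold c. unfold B.
    change (fun i => norms a vs (S i)) with (norms a (fun i => vs (S i))). ring.
Qed.

Lemma Mw_pl_bound q Om w : weight_le r Om w -> pl_bound (S q) a r (Mw q w) (Om * (3 * c) ^ q).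
Proof.
  intros Hw vs Hvs.
  pose proof (Mw_elle_bound q Om w vs Hw Hvs) as B.
  destruct (majorant_bound r c r_pos (elle_mul_const_nonneg a) q (norms a vs)) as [_ [HGe HGs]];
    [intros; apply elle_norm_nonneg|intros i Hi; apply Hvs; lia|].
  destruct Hw as [HOm _].
  assert (Hle : forall n, Rabs (r ^ n * elle_norm a (Mw q w vs n))
                          <= Om * (r ^ n * majorant (r * r) c q (norms a vs) n)).
  { intro n. rewrite Rabs_pos_eq by (apply Rmult_le_pos; [apply pow_le; lra|apply elle_norm_nonneg]).
    destruct (B n) as [_ Hb]. pose proof (pow_lt r n r_pos).
    apply Rle_trans with (r ^ n * (Om * majorant (r * r) c q (norms a vs) n));
      [apply Rmult_le_compat_l; lra|right; ring]. }
  destruct (ex_series_dominated _ _ Hle (ex_series_Rscal Om _ HGe)) as [Hex Hs].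
  split; [split; [intro n; apply (B n)|exact Hex]|].
  unfold Xnorm. rewrite Rabs_pos_eq in Hs.
  2:{ apply Series_nonneg; [|exact Hex].
      intro; apply Rmult_le_pos; [apply pow_le; lra|apply elle_norm_nonneg]. }
  eapply Rle_trans; [exact Hs|]. rewrite Series_scal_l, Rmult_assoc.
  apply Rmult_le_compat_l; [exact HOm|exact HGs].
Qed.

Lemma Mw_series_converge q Om w vs : weight_le r Om w -> args_inX (S (S q)) a r vs -> forall n j,
  ex_series (fun k => vs O (n + k)%nat j * Mw q (wshift k w) (fun i => vs (S i)) k j) /\
  ex_series (fun m => vs O (S m) j * Mw q (wshift (S m) w) (fun i => vs (S i)) (n + S m)%nat j).
Proof.
  intros Hw Hvs n j.
  assert (IH : forall Om' w', weight_le r Om' w' -> forall n, in_elle a (Mw q w' (fun i => vs (S i)) n) /\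
      elle_norm a (Mw q w' (fun i => vs (S i)) n)
        <= Om' * majorant (r * r) c q (norms a (fun i => vs (S i))) n)
    by (intros; apply Mw_elle_bound; [assumption|apply args_tail, Hvs]).
  split; [apply (Mw_up_le q w Om vs Hw Hvs IH n j)|apply (Mw_down_le q w Om vs Hw Hvs IH n j)].
Qed.

End MwEstimates.

Lemma Mw_succ_lincomb q (w1 w2 w3 : nat -> R) (vs1 vs2 vs3 : nat -> V) c n j :
  (forall k m n', vs3 O k j * Mw q (wshift m w3) (fun i => vs3 (S i)) n' j =
     vs1 O k j * Mw q (wshift m w1) (fun i => vs1 (S i)) n' j
     + c * (vs2 O k j * Mw q (wshift m w2) (fun i => vs2 (S i)) n' j)) ->
  (forall w vs, w = w1 /\ vs = vs1 \/ w = w2 /\ vs = vs2 ->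
     ex_series (fun k => vs O (n + k)%nat j * Mw q (wshift k w) (fun i => vs (S i)) k j) /\
     ex_series (fun m => vs O (S m) j * Mw q (wshift (S m) w) (fun i => vs (S i)) (n + S m)%nat j)) ->
  Mw (S q) w3 vs3 n j = Mw (S q) w1 vs1 n j + c * Mw (S q) w2 vs2 n j.
Proof.
  intros Hlin Hex. cbn [Mw].
  destruct (Hex w1 vs1 (or_introl (conj eq_refl eq_refl))) as [U1 D1].
  destruct (Hex w2 vs2 (or_intror (conj eq_refl eq_refl))) as [U2 D2].
  rewrite (sum_eq _ _ _ (fun n1 _ => Hlin n1 O (n - n1)%nat)), sum_plus, sum_f_R0_scal_l.
  rewrite (Series_ext _ _ (fun k => Hlin (n + k)%nat k k)).
  rewrite (Series_ext _ _ (fun m => Hlin (S m) (S m) (n + S m)%nat)).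
  rewrite (Series_plus_scal _ _ c U1 U2), (Series_plus_scal _ _ c D1 D2).
  change (wshift 0 w1) with w1. change (wshift 0 w2) with w2. ring.
Qed.

Section MwLinear.
Variables (a r : R).
Hypotheses (a_pos : 0 < a) (r_pos : 0 < r).

Lemma Mw_lin_weight : forall q w1 w2 Om1 Om2 c vs,
  weight_le r Om1 w1 -> weight_le r Om2 w2 -> args_inX (S q) a r vs -> forall n j,
  Mw q (fun E => w1 E + c * w2 E) vs n j = Mw q w1 vs n j + c * Mw q w2 vs n j.
Proof.
  induction q as [|q IH]; intros w1 w2 Om1 Om2 c vs H1 H2 Hvs n j; [cbn [Mw]; ring|].
  apply Mw_succ_lincomb.
  - intros k m n'.
    change (wshift m (fun E => w1 E + c * w2 E)) with (fun E => wshift m w1 E + c * wshift m w2 E).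
    rewrite (IH _ _ _ _ c _ (weight_le_shift r _ _ m H1) (weight_le_shift r _ _ m H2) (args_tail _ _ _ _ Hvs)).
    ring.
  - intros w vs' [[-> ->]|[-> ->]]; eapply (Mw_series_converge a r a_pos r_pos); eauto.
Qed.

Lemma Mw_lin_arg : forall q w Om vs i u u' c, weight_le r Om w -> (i < S q)%nat ->
  args_inX (S q) a r vs -> inX a r u -> inX a r u' -> forall n j,
  Mw q w (upd vs i (Vadd u (Vscal c u'))) n j = Mw q w (upd vs i u) n j + c * Mw q w (upd vs i u') n j.
Proof.
  induction q as [|q IH]; intros w Om vs i u u' c Hw Hi Hvs Hu Hu' n j.
  - destruct i; [|lia]. cbn [Mw]. unfold upd, Vadd, Vscal. simpl. ring.
  - apply Mw_succ_lincomb.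
    + intros k m n'. destruct i as [|i].
      * change (fun l => upd vs O ?X (S l)) with (fun l => vs (S l)).
        unfold upd, Vadd, Vscal. simpl. ring.
      * change (fun l => upd vs (S i) ?X (S l)) with (upd (fun l => vs (S l)) i X).
        change (upd vs (S i) ?X O) with (vs O).
        rewrite (IH _ _ _ i u u' c (weight_le_shift r Om w m Hw)); [ring|lia|apply args_tail, Hvs|auto|auto].
    + intros w' vs' [[-> ->]|[-> ->]];
        eapply (Mw_series_converge a r a_pos r_pos); eauto using args_upd.
Qed.

Lemma Mw_in_Lp q w Om : weight_le r Om w -> in_Lp (S q) a r (Mw q w).
Proof.
  intros Hw. split; [|eexists; apply (Mw_pl_bound a r a_pos r_pos q Om w Hw)].
  intros vs i u u' c Hi Hvs Hu Hu'.
  apply functional_extensionality; intro n. apply functional_extensionality; intro j.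
  unfold Vadd at 2, Vscal at 2. apply (Mw_lin_arg q w Om); auto.
Qed.

End MwLinear.

Lemma Mk_Mw : forall q s vs n j, Mk (S q) s vs n j = Mw q (pow s) vs n j.
Proof.
  induction q as [|q IH]; intros s vs n j; [cbn [Mk Mw]; simpl; ring|].
  change (Mk (S (S q)) s vs) with (Mbil s (vs O) (Mk (S q) s (fun i => vs (S i)))).
  unfold Mbil. cbn [Mw].
  assert (Hsh : forall k, wshift k (pow s) = (fun E => s ^ k * pow s E))
    by (intro k; apply functional_extensionality; intro E; apply pow_add).
  f_equal; [f_equal|].
  - apply sum_eq. intros i _. rewrite IH. reflexivity.
  - apply Series_ext. intro k. rewrite Hsh, Mw_scal_weight, IH. ring.
  - apply Series_ext. intro k. rewrite Hsh, Mw_scal_weight, IH. ring.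
Qed.

Lemma Mk_eq_Mw q s : Mk (S q) s = Mw q (pow s).
Proof.
  apply functional_extensionality; intro vs.
  apply functional_extensionality; intro n. apply functional_extensionality; intro j. apply Mk_Mw.
Qed.

Lemma weight_le_pow r s : Rabs s <= r * r -> weight_le r 1 (pow s).
Proof.
  intros Hs. split; [lra|]. intro E. rewrite Rmult_1_l, <- RPow_abs.
  apply pow_incr. split; [apply Rabs_pos|exact Hs].
Qed.

Fixpoint psum (f : nat -> R) (N : nat) : R :=
  match N with O => 0 | S m => psum f m + f m end.

Lemma psum_ext f g M : (forall i, f i = g i) -> psum f M = psum g M.
Proof. intros H; induction M; simpl; [reflexivity|rewrite IHM, H; reflexivity]. Qed.

Lemma psum_add f N M : psum f (N + M) = psum f N + psum (fun i => f (N + i)%nat) M.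
Proof.
  induction M; simpl; [rewrite Nat.add_0_r; ring|].
  rewrite Nat.add_succ_r. simpl. rewrite IHM. ring.
Qed.

Lemma psum_scal f c M : psum (fun i => c * f i) M = c * psum f M.
Proof. induction M; simpl; [ring|rewrite IHM; ring]. Qed.

Lemma psum_abs f M : Rabs (psum f M) <= psum (fun i => Rabs (f i)) M.
Proof. induction M; simpl; [rewrite Rabs_R0; lra|]. eapply Rle_trans; [apply Rabs_triang|]. lra. Qed.

Lemma psum_le f g M : (forall i, f i <= g i) -> psum f M <= psum g M.
Proof. intros H; induction M; simpl; [lra|]. specialize (H M). lra. Qed.

Lemma psum_nonneg f M : (forall i, 0 <= f i) -> 0 <= psum f M.
Proof. intros H; induction M; simpl; [lra|]. specialize (H M). lra. Qed.

Lemma psum_ge_term f k M : (forall i, 0 <= f i) -> (k < M)%nat -> f k <= psum f M.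
Proof.
  intros H Hk. induction M as [|M IH]; [lia|]. simpl.
  pose proof (psum_nonneg f M H). specialize (H M).
  destruct (Nat.eq_dec k M) as [->|]; [lra|]. assert (f k <= psum f M) by (apply IH; lia). lra.
Qed.

Lemma psum_trunc f E M : (forall k, (E < k)%nat -> f k = 0) -> psum f (S E + M) = psum f (S E).
Proof.
  intros H. rewrite psum_add, (psum_ext (fun i => f (S E + i)%nat) (fun _ => 0)) by (intro i; apply H; lia).
  enough (Hz : psum (fun _ => 0) M = 0) by (rewrite Hz; ring).
  induction M; simpl; [reflexivity|rewrite IHM; ring].
Qed.

Lemma binomial_C_nonneg n k : 0 <= Binomial.C n k.
Proof.
  unfold Binomial.C, Rdiv. apply Rmult_le_pos; [left; apply INR_fact_lt_0|].
  left. apply Rinv_0_lt_compat, Rmult_lt_0_compat; apply INR_fact_lt_0.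
Qed.

Definition pow_taylor_coef (s0 : R) (k E : nat) : R :=
  if (k <=? E)%nat then Binomial.C E k * s0 ^ (E - k) else 0.

Definition binom_term (h s0 : R) (E k : nat) : R := h ^ k * pow_taylor_coef s0 k E.

Lemma binom_term_trunc h s0 E k : (E < k)%nat -> binom_term h s0 E k = 0.
Proof. intro H. unfold binom_term, pow_taylor_coef. destruct (Nat.leb_spec k E); [lia|ring]. Qed.

Lemma pow_add_psum h s0 E : (h + s0) ^ E = psum (binom_term h s0 E) (S E).
Proof.
  rewrite binomial.
  enough (Hs : forall f N, psum f (S N) = sum_f_R0 f N).
  { rewrite Hs. apply sum_eq. intros i Hi. unfold binom_term, pow_taylor_coef.
    rewrite (proj2 (Nat.leb_le i E) Hi). ring. }
  intros f N. induction N; simpl in *; [ring|]. rewrite <- IHN. reflexivity.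
Qed.

Lemma binom_term_abs h s0 E k : Rabs (binom_term h s0 E k) = binom_term (Rabs h) (Rabs s0) E k.
Proof.
  unfold binom_term, pow_taylor_coef. destruct (k <=? E)%nat; [|rewrite !Rmult_0_r; apply Rabs_R0].
  rewrite !Rabs_mult, <- !RPow_abs, (Rabs_pos_eq (Binomial.C E k)) by apply binomial_C_nonneg.
  reflexivity.
Qed.

Lemma binom_term_nonneg h s0 E k : 0 <= h -> 0 <= s0 -> 0 <= binom_term h s0 E k.
Proof.
  intros H1 H2. unfold binom_term, pow_taylor_coef.
  apply Rmult_le_pos; [apply pow_le; lra|]. destruct (k <=? E)%nat; [|lra].
  apply Rmult_le_pos; [apply binomial_C_nonneg|apply pow_le; lra].
Qed.

Section TaylorWeights.
Variables (r s0 : R).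
Let rho := r * r - Rabs s0.
Hypothesis rho_pos : 0 < rho.

Let binom_term_rho_sum E : psum (binom_term rho (Rabs s0) E) (S E) = (r * r) ^ E.
Proof. rewrite <- pow_add_psum. f_equal. unfold rho. ring. Qed.

Lemma weight_le_taylor_coef k : weight_le r (/ rho ^ k) (pow_taylor_coef s0 k).
Proof.
  pose proof (pow_lt rho k rho_pos) as Hp.
  split; [left; apply Rinv_0_lt_compat, Hp|]. intro E.
  apply (Rmult_le_reg_l (rho ^ k)); [exact Hp|].
  replace (rho ^ k * (/ rho ^ k * (r * r) ^ E)) with ((r * r) ^ E) by (field; lra).
  rewrite <- (Rabs_pos_eq (rho ^ k)) at 1 by lra. rewrite <- Rabs_mult.
  change (rho ^ k * pow_taylor_coef s0 k E) with (binom_term rho s0 E k).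
  rewrite binom_term_abs, (Rabs_pos_eq rho) by lra. rewrite <- binom_term_rho_sum.
  destruct (Nat.leb_spec k E).
  - apply psum_ge_term; [|lia]. intro; apply binom_term_nonneg; [lra|apply Rabs_pos].
  - rewrite binom_term_trunc by lia. apply psum_nonneg.
    intro; apply binom_term_nonneg; [lra|apply Rabs_pos].
Qed.

(* The remainder consists of the binomial terms of index [k >= N], each at most
   [(|h| / rho) ^ N] times the corresponding term of [(rho + |s0|) ^ E = (r * r) ^ E]. *)
Lemma pow_taylor_remainder_le h N E : Rabs h < rho ->
  Rabs ((s0 + h) ^ E - psum (fun k => h ^ k * pow_taylor_coef s0 k E) N)
    <= (Rabs h / rho) ^ N * (r * r) ^ E.
Proof.
  intros Hh. set (th := Rabs h / rho).
  assert (Hth0 : 0 <= th) by (apply Rmult_le_pos; [apply Rabs_pos|left; apply Rinv_0_lt_compat; lra]).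
  assert (Hth1 : th <= 1) by (apply (Rmult_le_reg_r rho); [lra|]; unfold th; field_simplify; lra).
  change (fun k => h ^ k * pow_taylor_coef s0 k E) with (binom_term h s0 E).
  rewrite Rplus_comm, pow_add_psum.
  rewrite <- (psum_trunc (binom_term h s0 E) E N) by (intros; apply binom_term_trunc; auto).
  replace (S E + N)%nat with (N + S E)%nat by lia. rewrite psum_add.
  replace (psum (binom_term h s0 E) N + psum (fun i => binom_term h s0 E (N + i)%nat) (S E)
           - psum (binom_term h s0 E) N)
    with (psum (fun i => binom_term h s0 E (N + i)%nat) (S E)) by ring.
  eapply Rle_trans; [apply psum_abs|].
  apply Rle_trans with (psum (fun i => th ^ N * binom_term rho (Rabs s0) E (N + i)%nat) (S E)).
  - apply psum_le. intro i. rewrite binom_term_abs. unfold binom_term.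
    rewrite <- Rmult_assoc. apply Rmult_le_compat_r.
    + unfold pow_taylor_coef. destruct (N + i <=? E)%nat; [|lra].
      apply Rmult_le_pos; [apply binomial_C_nonneg|apply pow_le, Rabs_pos].
    + replace (Rabs h) with (th * rho) by (unfold th; field; lra).
      rewrite Rpow_mult_distr, pow_add. apply Rmult_le_compat_r; [apply pow_le; lra|].
      rewrite <- (Rmult_1_r (th ^ N)) at 2. apply Rmult_le_compat_l; [apply pow_le; lra|].
      rewrite <- (pow1 i). apply pow_incr. lra.
  - rewrite psum_scal. apply Rmult_le_compat_l; [apply pow_le; lra|].
    rewrite <- binom_term_rho_sum, <- (psum_trunc (binom_term rho (Rabs s0) E) E N) by (intros; apply binom_term_trunc; auto).
    replace (S E + N)%nat with (N + S E)%nat by lia. rewrite psum_add.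
    enough (0 <= psum (binom_term rho (Rabs s0) E) N) by lra.
    apply psum_nonneg. intro; apply binom_term_nonneg; [lra|apply Rabs_pos].
Qed.

End TaylorWeights.

Lemma Xnorm_nonneg a r v : 0 < r -> inX a r v -> 0 <= Xnorm a r v.
Proof.
  intros Hr [_ Hv]. apply Series_nonneg; [|exact Hv].
  intro; apply Rmult_le_pos; [apply pow_le; lra|apply elle_norm_nonneg].
Qed.

Lemma pl_bound_le p a r T K K' : 0 < r -> K <= K' -> pl_bound p a r T K -> pl_bound p a r T K'.
Proof.
  intros Hr HK H vs Hvs. destruct (H vs Hvs) as [H1 H2]. split; [exact H1|].
  eapply Rle_trans; [exact H2|]. apply Rmult_le_compat_r; [|exact HK].
  apply prodR_nonneg. intros i Hi. apply Xnorm_nonneg; auto.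
Qed.

Section MkExpansion.
Variables (a r : R).
Hypotheses (a_pos : 0 < a) (r_pos : 0 < r).
Let K (q : nat) := (3 * elle_mul_const a) ^ q.

Lemma Mk_pl_bound q s : Rabs s <= r * r -> pl_bound (S q) a r (Mk (S q) s) (K q).
Proof.
  intros Hs. rewrite Mk_eq_Mw, <- (Rmult_1_l (K q)).
  apply (Mw_pl_bound a r a_pos r_pos), weight_le_pow, Hs.
Qed.

Variables (s0 h : R).
Let rho := r * r - Rabs s0.
Hypothesis rho_pos : 0 < rho.

Let taylor_psum_weight N := fun E => psum (fun k => h ^ k * pow_taylor_coef s0 k E) N.

Lemma weight_le_taylor_psum N : exists Om, weight_le r Om (taylor_psum_weight N).
Proof.
  induction N as [|N [Om HOm]]; [exists 0; split; [lra|intro E; unfold taylor_psum_weight; simpl; rewrite Rabs_R0; lra]|].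
  eexists. apply (weight_le_lin r _ _ _ _ (h ^ N) HOm (weight_le_taylor_coef r s0 rho_pos N)).
Qed.

Lemma pl_psum_taylor_Mw q N vs : args_inX (S q) a r vs ->
  pl_psum (fun k => Mw q (pow_taylor_coef s0 k)) h N vs = Mw q (taylor_psum_weight N) vs.
Proof.
  intros Hvs. induction N as [|N IHN]; cbn [pl_psum];
    apply functional_extensionality; intro n; apply functional_extensionality; intro j.
  - transitivity (0 * Mw q (fun _ => 0) vs n j); [unfold Vzero; ring|].
    rewrite <- Mw_scal_weight. f_equal. apply functional_extensionality; intro E.
    unfold taylor_psum_weight. simpl. ring.
  - unfold pl_add, pl_scal, Vadd, Vscal. rewrite IHN.
    destruct (weight_le_taylor_psum N) as [Om HOm].
    symmetry. apply (Mw_lin_weight a r a_pos r_pos q _ _ Om _ (h ^ N) vs HOm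
      (weight_le_taylor_coef r s0 rho_pos N) Hvs).
Qed.

(* The remainder of the expansion is [Mw] applied to the remainder of the weights. *)
Lemma Mk_taylor_remainder q N : Rabs h < rho ->
  pl_bound (S q) a r (pl_sub (Mk (S q) (s0 + h)) (pl_psum (fun k => Mw q (pow_taylor_coef s0 k)) h N))
    ((Rabs h / rho) ^ N * K q).
Proof.
  intros Hh vs Hvs.
  destruct (weight_le_taylor_psum N) as [Om HOm].
  assert (Hw : weight_le r ((Rabs h / rho) ^ N)
                 (fun E => (s0 + h) ^ E + (-1) * taylor_psum_weight N E)).
  { split; [apply pow_le, Rmult_le_pos; [apply Rabs_pos|left; apply Rinv_0_lt_compat, rho_pos]|].
    intro E. replace ((s0 + h) ^ E + -1 * taylor_psum_weight N E)
      with ((s0 + h) ^ E - taylor_psum_weight N E) by ring.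
    apply pow_taylor_remainder_le; assumption. }
  replace (pl_sub _ _ vs) with (Mw q (fun E => (s0 + h) ^ E + (-1) * taylor_psum_weight N E) vs).
  - apply (Mw_pl_bound a r a_pos r_pos q _ _ Hw vs Hvs).
  - unfold pl_sub. rewrite pl_psum_taylor_Mw, Mk_eq_Mw by exact Hvs.
    apply functional_extensionality; intro n; apply functional_extensionality; intro j.
    unfold Vsub. rewrite (Mw_lin_weight a r a_pos r_pos q _ _ 1 Om (-1) vs); [ring| |exact HOm|exact Hvs].
    apply weight_le_pow. eapply Rle_trans; [apply Rabs_triang|]. unfold rho in Hh. lra.
Qed.

End MkExpansion.

Lemma Mk_real_analytic a r q rho0 : 0 < a -> 0 < r -> rho0 <= r * r ->
  real_analytic_Lp (S q) a r (Mk (S q)) rho0.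
Proof.
  intros Ha Hr Hrho0. split.
  { intros s Hs. rewrite Mk_eq_Mw. apply (Mw_in_Lp a r Ha Hr q _ 1), weight_le_pow. lra. }
  intros s0 Hs0. set (rho := r * r - Rabs s0).
  assert (Hrho : 0 < rho) by (unfold rho; lra).
  exists rho. split; [exact Hrho|].
  exists (fun k => Mw q (pow_taylor_coef s0 k)). split.
  { intro k. apply (Mw_in_Lp a r Ha Hr q _ (/ rho ^ k)), weight_le_taylor_coef, Hrho. }
  intros s Hs _ eps Heps.
  set (K := (3 * elle_mul_const a) ^ q).
  assert (HK : 0 <= K) by (apply pow_le; pose proof (elle_mul_const_nonneg a); lra).
  set (th := Rabs (s - s0) / rho).
  assert (Hth : 0 <= th < 1).
  { split; [apply Rmult_le_pos; [apply Rabs_pos|left; apply Rinv_0_lt_compat, Hrho]|].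
    apply (Rmult_lt_reg_r rho); [exact Hrho|]. unfold th. field_simplify; lra. }
  destruct (pow_lt_1_zero th (ltac:(rewrite Rabs_pos_eq; lra)) (eps / (K + 1)))
    as [N0 HN0]; [apply Rdiv_lt_0_compat; lra|].
  exists N0. intros N HN.
  replace (Mk (S q) s) with (Mk (S q) (s0 + (s - s0))) by (f_equal; ring).
  apply (pl_bound_le _ _ _ _ (th ^ N * K)); [exact Hr| |apply Mk_taylor_remainder; assumption].
  specialize (HN0 N HN). rewrite Rabs_pos_eq in HN0 by (apply pow_le; lra).
  apply Rlt_le, Rle_lt_trans with (eps / (K + 1) * K); [apply Rmult_le_compat_r; lra|].
  apply (Rmult_lt_reg_r (K + 1)); [lra|]. field_simplify; [nra|lra].
Qed.

Theorem lemma2p2 (a r delta : R) (p : nat) :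
  0 < a -> 0 < r -> 0 < delta -> delta < r -> (2 <= p)%nat ->
  real_analytic_Lp p a r (fun s => Mk p s) (delta ^ 2) /\
  exists K : R, forall z : C, Cmod z < delta -> pl_bound p a r (Mk p (Cmod z ^ 2)) K.
Proof.
  intros Ha Hr Hd Hdr Hp. destruct p as [|q]; [lia|].
  split; [apply Mk_real_analytic; auto; simpl; nra|].
  eexists. intros z Hz. apply (Mk_pl_bound a r Ha Hr q).
  pose proof (Cmod_ge_0 z). rewrite Rabs_pos_eq by (apply pow_le; lra). simpl. nra.
Qed.
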